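(* Let $n$ be a positive integer and let $w_1 \le \dots \le w_m$ be a feasible partition of $n$, with partial sums $R_i = w_1+\dots+w_i$ and $R_0=0$. Then for every $i$ with $1 \le i \le m$, $w_i \le 2R_{i-1}+1$.
   Context: For a positive integer $n$, a weighing partition of $n$ is a multiset of positive integers $\{w_1,\dots,w_k\}$ summing to $n$ such that every integer $\ell$ with $1\le\ell\le n$ equals $\sum_j u_j w_j$ for some $u_j\in\{-1,0,1\}$. Let $m$ be the minimum number of parts of a weighing partition of $n$. A feasible partition of $n$ is a weighing partition with exactly $m$ parts, written $w_1\le\dots\le w_m$. $R_i=w_1+\dots+w_i$, $R_0=0$, so $R_m=n$. *)

From mathcomp Require Import all_boot all_order all_algebra.
Set Implicit Arguments. Unset Strict Implicit. Unset Printing Implicit Defensive.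
Import Order.TTheory GRing.Theory Num.Theory.

(* A multiset of positive integers is represented by a list [w] (order of the
   entries is irrelevant for the definitions below). *)

Definition weighing_partition (n : nat) (w : seq nat) : Prop :=
  all (fun x => 0 < x)%N w /\ sumn w = n /\
  forall l : nat, (1 <= l <= n)%N ->
    exists u : nat -> int,
      (forall j, u j \in [:: (-1)%R; 0%R; 1%R]) /\
      (l%:Z = \sum_(j < size w) u j * (nth 0%N w j)%:Z)%R.

Definition feasible_partition (n : nat) (w : seq nat) : Prop :=
  weighing_partition n w /\
  forall w' : seq nat, weighing_partition n w' -> (size w <= size w')%N.

(* R_i = w_1 + ... + w_i (1-indexed), R_0 = 0 *)
Definition R_ (w : seq nat) (i : nat) : nat := sumn (take i w).

From mathcomp Require Import all_boot all_order all_algebra.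
From mathcomp Require Import zify.
Set Implicit Arguments. Unset Strict Implicit. Unset Printing Implicit Defensive.
Import Order.TTheory GRing.Theory Num.Theory.

(* Index from 0, so that R_k = w_0 + ... + w_(k-1).  If w_k > 2 R_k + 1, weigh
   l = n - (2 R_k + 1) with signs u_j: the slack sum_j (1 - u_j) w_j of this
   weighing is n - l = 2 R_k + 1.  The parts before w_k contribute at most 2 R_k,
   so some part w_j with j >= k has u_j <> 1, and it alone contributes
   w_j >= w_k > 2 R_k + 1. *)

Lemma R_sumE (w : seq nat) (k : nat) : (k <= size w)%N ->
  R_ w k = (\sum_(0 <= j < k) nth 0 w j)%N.
Proof.
move=> kw; rewrite /R_ sumnE (big_nth 0) size_takel //.
by apply: eq_big_nat => j /andP[_ jk]; rewrite nth_take.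
Qed.

Lemma R_add_nth_le_sumn (w : seq nat) (k : nat) : (k < size w)%N ->
  (R_ w k + nth 0 w k <= sumn w)%N.
Proof.
move=> kw; rewrite /R_ -sumn_rcons -take_nth //.
by rewrite -{2}(cat_take_drop k.+1 w) sumn_cat leq_addr.
Qed.

Section Slack.

Local Open Scope ring_scope.

Variables (w : seq nat) (u : nat -> int).
Hypothesis u_sign : forall j, u j \in [:: -1; 0; 1].

Let x j : int := (nth 0%N w j)%:Z.
Let slack j : int := (1 - u j) * x j.

Lemma slack_ge0 j : 0 <= slack j.
Proof. by apply: mulr_ge0 => //; move: (u_sign j); rewrite !inE => /or3P[]/eqP->. Qed.

Lemma slack_le j : slack j <= 2 * x j.
Proof. by apply: ler_wpM2r => //; move: (u_sign j); rewrite !inE => /or3P[]/eqP->. Qed.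

Lemma slack_ge j : u j != 1 -> x j <= slack j.
Proof.
move=> uj; apply: ler_peMl => //.
by move: (u_sign j) uj; rewrite !inE => /or3P[]/eqP->.
Qed.

Lemma prefix_slack_le k : (k <= size w)%N ->
  \sum_(0 <= j < k) slack j <= 2 * (R_ w k)%:Z.
Proof.
move=> kw; rewrite R_sumE // (big_morph Posz PoszD (erefl _)) mulr_sumr.
by apply: ler_sum => j _; apply: slack_le.
Qed.

Lemma suffix_slack_gap k : sorted leq w -> (k < size w)%N ->
  let S := \sum_(k <= j < size w) slack j in S = 0 \/ x k <= S.
Proof.
move=> w_sorted kw S.
have [/hasP[j jr uj] | /hasPn u1] :=
  boolP (has (fun j => u j != 1) (index_iota k (size w))).
  right; have /andP[kj js] : (k <= j < size w)%N by rewrite -mem_index_iota.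
  have wkj : x k <= x j.
    by rewrite lez_nat (sorted_leq_nth leq_trans leqnn 0 w_sorted) ?inE.
  apply: le_trans wkj (le_trans (slack_ge uj) _).
  rewrite /S (bigD1_seq j) ?iota_uniq //= lerDl.
  by apply: sumr_ge0 => i _; apply: slack_ge0.
left; rewrite /S big_seq; apply: big1 => j /u1.
by rewrite negbK => /eqP uj; rewrite /slack uj subrr mul0r.
Qed.

Lemma deficit_gap k : sorted leq w -> (k < size w)%N ->
  let D := (sumn w)%:Z - \sum_(j < size w) u j * x j in
  D <= 2 * (R_ w k)%:Z \/ x k <= D.
Proof.
move=> w_sorted kw D.
have -> : D = \sum_(0 <= j < k) slack j + \sum_(k <= j < size w) slack j.
  rewrite -big_cat_nat ?(ltnW kw) //= /D -(big_mkord xpredT (fun j => u j * x j)).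
  rewrite sumnE (big_nth 0) (big_morph Posz PoszD (erefl _)) -sumrB.
  by apply: eq_bigr => j _; rewrite /slack mulrBl mul1r.
have [S0 | wkS] := suffix_slack_gap w_sorted kw.
  by left; rewrite S0 addr0 prefix_slack_le ?(ltnW kw).
right; apply: le_trans wkS _; rewrite lerDr.
by apply: sumr_ge0 => j _; apply: slack_ge0.
Qed.

End Slack.

Lemma sorted_weighing_partition_gap (n : nat) (w : seq nat) (k : nat) :
  weighing_partition n w -> sorted leq w -> (k < size w)%N ->
  (nth 0 w k <= 2 * R_ w k + 1)%N.
Proof.
move=> [_ [sumw weigh]] w_sorted kw; rewrite leqNgt; apply/negP => big_wk.
have wk_le_n := R_add_nth_le_sumn kw; rewrite sumw in wk_le_n.
have [|u [u_sign l_eq]] := weigh (n - (2 * R_ w k + 1))%N; first lia.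
have D_eq : ((sumn w)%:Z - \sum_(j < size w) u j * (nth 0 w j)%:Z
            = (2 * R_ w k + 1)%:Z)%R.
  by rewrite -l_eq sumw subzn; lia.
have [|] := deficit_gap u_sign w_sorted kw; rewrite D_eq lez_nat; lia.
Qed.

(* w_i (1-indexed) is nth 0 w (i-1); the list is sorted nondecreasingly. *)
Theorem theorem2 (n : nat) (w : seq nat) :
  (0 < n)%N -> feasible_partition n w -> sorted leq w ->
  forall i : nat, (1 <= i <= size w)%N ->
    (nth 0 w i.-1 <= 2 * R_ w i.-1 + 1)%N.
Proof.
move=> _ [weighing _] w_sorted [|i] //= iw.
exact: sorted_weighing_partition_gap weighing w_sorted iw.
Qed.
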